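(* For every sequence $S\in[n]^m$ there exist a finite set $X\subset\mathbb Q\setminus[n]$ and an offline algorithm in the dynamic BST model with key set $[n]\cup X$ that serves $S$, keeps every element of $[n]$ a leaf of the tree at all times, and has total cost at most $3\,\mathrm{OPT}(S)$.
   Context: Dynamic BST model on a finite key set $K\subset\mathbb Q$: an algorithm chooses an initial BST on $K$. To serve access $s_t$ it touches a set of nodes forming a connected subtree containing the root and $s_t$, may rearrange the touched nodes into any BST shape (untouched subtrees reattached validly), and pays the number of touched nodes. $\mathrm{OPT}(S)$ is the minimum total cost of serving $S$ over all offline algorithms with key set $[n]$. *)

From mathcomp Require Import all_boot all_order all_algebra.
Set Implicit Arguments. Unset Strict Implicit. Unset Printing Implicit Defensive.
Import Order.TTheory GRing.Theory Num.Theory.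
Local Open Scope ring_scope.

(* Binary trees with rational keys; [Leaf] is the empty tree. *)
Inductive tree := Leaf | Node of tree & rat & tree.

Fixpoint inorder (t : tree) : seq rat :=
  if t is Node l k r then inorder l ++ k :: inorder r else [::].

Definition is_bst_on (K : seq rat) (t : tree) : Prop :=
  sorted <%R (inorder t) /\ inorder t =i K.

Fixpoint leaf_keys (t : tree) : seq rat :=
  match t with
  | Leaf => [::]
  | Node Leaf k Leaf => [:: k]
  | Node l _ r => leaf_keys l ++ leaf_keys r
  end.

(* Top part of a tree: a connected set of nodes containing the root
   (if nonempty), with holes for the hanging (untouched, possibly empty)
   subtrees, in left-to-right order. *)
Inductive ctx := Hole | CNode of ctx & rat & ctx.

Fixpoint ckeys (c : ctx) : seq rat :=
  if c is CNode l k r then ckeys l ++ k :: ckeys r else [::].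

Definition csize (c : ctx) : nat := size (ckeys c).

Inductive Fill : ctx -> seq tree -> tree -> Prop :=
  | Fill_hole t : Fill Hole [:: t] t
  | Fill_node c1 ts1 t1 k c2 ts2 t2 :
      Fill c1 ts1 t1 -> Fill c2 ts2 t2 ->
      Fill (CNode c1 k c2) (ts1 ++ ts2) (Node t1 k t2).

(* Serving access s: touch the top part c of t (containing the root and s),
   rearrange the touched nodes into another shape c', reattach the same
   untouched subtrees ts, obtaining a BST t' on K; cost = #touched nodes. *)
Definition step (K : seq rat) (s : rat) (t t' : tree) (cost : nat) : Prop :=
  exists (c c' : ctx) (ts : seq tree),
    [/\ Fill c ts t, Fill c' ts t', s \in ckeys c,
        perm_eq (ckeys c) (ckeys c') & is_bst_on K t'] /\ cost = csize c.

Inductive run (K : seq rat) (P : tree -> Prop) : tree -> seq rat -> nat -> Prop :=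
  | run_nil t : P t -> run K P t [::] 0
  | run_cons s S t t' k c :
      P t -> step K s t t' k -> run K P t' S c -> run K P t (s :: S) (k + c)%N.

Definition serves (K : seq rat) (P : tree -> Prop) (S : seq rat) (cost : nat) : Prop :=
  exists t0, is_bst_on K t0 /\ run K P t0 S cost.

Definition nkeys (n : nat) : seq rat := [seq (i%:R : rat) | i <- iota 1 n].

Definition n_leaves (n : nat) (t : tree) : Prop :=
  forall i, (0 < i <= n)%N -> (i%:R : rat) \in leaf_keys t.

Definition is_OPT (n : nat) (S : seq rat) (o : nat) : Prop :=
  serves (nkeys n) (fun _ => True) S o /\
  forall c, serves (nkeys n) (fun _ => True) S c -> (o <= c)%N.

(** The auxiliary keys [k - 1/3] and [k + 1/3] let every node [k] of a BST on
    [[n]] be replaced by a three-node gadget: an internal node [k + 1/3] whose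
    left child is an internal node [k - 1/3] carrying the expanded left subtree
    and the leaf [k], and whose right child is the expanded right subtree.  The expanded tree has every element of [[n]] as a leaf,
    and an access touching [c] nodes of the original tree is simulated by
    touching the two auxiliary nodes of each of them plus the leaf of the
    accessed key, i.e. at most [3 c] nodes.  Expanding an optimal execution
    gives the bound. *)

From mathcomp Require Import all_boot all_order all_algebra.
From mathcomp Require Import lra zify.
From Stdlib Require Import Classical.
Set Implicit Arguments. Unset Strict Implicit. Unset Printing Implicit Defensive.
Import Order.TTheory GRing.Theory Num.Theory.
Local Open Scope ring_scope.

Lemma ex_minn_classic (P : nat -> Prop) :
  (exists m, P m) -> exists m, P m /\ forall c, P c -> (m <= c)%N.
Proof.
move=> [N PN]; apply: NNPP => nomin.
suff notP : forall m, ~ P m by exact: notP PN.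
elim/ltn_ind => m IH Pm; apply: nomin; exists m; split=> // c Pc.
by rewrite leqNgt; apply/negP => /IH.
Qed.

Lemma eq_mem_flatten_map (T U : eqType) (g : T -> seq U) (s1 s2 : seq T) :
  s1 =i s2 -> flatten (map g s1) =i flatten (map g s2).
Proof.
move=> E x; apply/flattenP/flattenP => -[y /mapP[k Hk ->] Hy];
  exists (g k) => //; apply: map_f; by rewrite ?E // -E.
Qed.

Lemma pairwise_flatten_map (T U : eqType) (rT : rel T) (rU : rel U)
    (g : U -> seq T) (s : seq U) :
  {in s, forall k, pairwise rT (g k)} ->
  {in s &, forall k k', rU k k' -> allrel rT (g k) (g k')} ->
  pairwise rU s -> pairwise rT (flatten (map g s)).
Proof.
elim: s => [|k s IH] //= gP sepP /andP[/allP rk rs].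
rewrite pairwise_cat gP ?mem_head // IH ?andbT //; last 2 first.
- by move=> a a_s; apply: gP; rewrite inE a_s orbT.
- by move=> a b a_s b_s; apply: sepP; rewrite inE ?a_s ?b_s orbT.
apply/allrelP => x y xk /flattenP[_ /mapP[k' k's ->] yk'].
have k'_ks : k' \in k :: s by rewrite inE k's orbT.
by have /allrelP := sepP k k' (mem_head _ _) k'_ks (rk k' k's); apply.
Qed.

Lemma sorted_flatten_map (T U : eqType) (rT : rel T) (rU : rel U)
    (g : U -> seq T) (s : seq U) :
  transitive rT -> transitive rU ->
  {in s, forall k, sorted rT (g k)} ->
  {in s &, forall k k', rU k k' -> allrel rT (g k) (g k')} ->
  sorted rU s -> sorted rT (flatten (map g s)).
Proof.
move=> trT trU gP sepP; rewrite !sorted_pairwise //.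
apply: pairwise_flatten_map sepP => k ks; rewrite -sorted_pairwise //; exact: gP.
Qed.

Lemma nkeysP n x : reflect (exists2 i, (0 < i <= n)%N & x = i%:R) (x \in nkeys n).
Proof.
by apply: (iffP mapP) => -[i i_n ->]; exists i => //; move: i_n; rewrite mem_iota; lia.
Qed.

Lemma sorted_nkeys n : sorted <%R (nkeys n).
Proof.
rewrite /nkeys sorted_map.
by apply: sub_sorted (iota_ltn_sorted 1 n) => i j /=; rewrite ltr_nat.
Qed.

Definition delta : rat := 1 / 3.

Lemma ltr_nat_delta (i j : nat) :
  (i%:R : rat) < j%:R -> i%:R + delta < j%:R - delta.
Proof. by rewrite ltr_nat -(ler_nat rat) -natr1 /delta; lra. Qed.

Lemma natr_delta_neq (i j : nat) : (i%:R : rat) + delta != j%:R.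
Proof. by apply/eqP; case: (leqP j i); rewrite -(ler_nat rat) ?natrS /delta; lra. Qed.

Lemma nat_blocks_sep (n : nat) (g : rat -> seq rat) :
  (forall k x, x \in g k -> k - delta <= x <= k + delta) ->
  {in nkeys n &, forall k k', k < k' -> allrel <%R (g k) (g k')}.
Proof.
move=> gP k k' /nkeysP[i _ ->] /nkeysP[j _ ->] /ltr_nat_delta ij.
apply/allrelP => x y /gP/andP[_ x_le] /gP/andP[le_y _]; lra.
Qed.

Definition gadget_keys (k : rat) : seq rat := [:: k - delta; k; k + delta].
Definition aux_pair (k : rat) : seq rat := [:: k - delta; k + delta].
Definition aux_keys (n : nat) : seq rat := flatten (map aux_pair (nkeys n)).

Lemma gadget_keys_bound k x : x \in gadget_keys k -> k - delta <= x <= k + delta.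
Proof. by rewrite !inE /delta => /or3P[] /eqP ->; apply/andP; split; lra. Qed.

Lemma aux_pair_bound k x : x \in aux_pair k -> k - delta <= x <= k + delta.
Proof. by rewrite !inE /delta => /orP[] /eqP ->; apply/andP; split; lra. Qed.

Lemma sorted_gadget_keys k : sorted <%R (gadget_keys k).
Proof. rewrite /= /delta andbT; apply/andP; split; lra. Qed.

Lemma sorted_aux_keys n : sorted <%R (aux_keys n).
Proof.
apply: sorted_flatten_map (@lt_trans _ _) (@lt_trans _ _) _
  (nat_blocks_sep aux_pair_bound) (sorted_nkeys n).
by move=> k _; rewrite /= /delta andbT; lra.
Qed.

Lemma uniq_aux_keys n : uniq (aux_keys n).
Proof. exact: lt_sorted_uniq (sorted_aux_keys n). Qed.

Lemma aux_keys_notin_nkeys n x : x \in aux_keys n -> x \notin nkeys n.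
Proof.
move=> /flattenP[_ /mapP[_ /nkeysP[i _ ->] ->]].
rewrite !inE => x_aux; apply/nkeysP => -[j _ xj]; move: x_aux.
rewrite xj => /orP[] /eqP E.
- by move/eqP: (natr_delta_neq j i); rewrite E subrK.
- by move/eqP: (natr_delta_neq i j); rewrite E.
Qed.

Lemma mem_flatten_gadget_keys (N : seq rat) :
  flatten (map gadget_keys N) =i N ++ flatten (map aux_pair N).
Proof.
elim: N => [|k N IH] x //=; rewrite !(inE, mem_cat) IH mem_cat.
by case: (x == k - delta); case: (x == k); case: (x == k + delta); rewrite ?orbT.
Qed.

Fixpoint expand (t : tree) : tree :=
  if t is Node l k r then
    Node (Node (expand l) (k - delta) (Node Leaf k Leaf)) (k + delta) (expand r)
  else Leaf.

Lemma inorder_expand t : inorder (expand t) = flatten (map gadget_keys (inorder t)).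
Proof.
elim: t => [|l IHl k r IHr] //=.
by rewrite map_cat flatten_cat /= IHl IHr -!catA.
Qed.

Lemma leaf_keys_Node l k r : (l <> Leaf \/ r <> Leaf) ->
  leaf_keys (Node l k r) = leaf_keys l ++ leaf_keys r.
Proof. by case: l => [|? ? ?]; case: r => [|? ? ?] //= []. Qed.

Lemma leaf_keys_expand t : leaf_keys (expand t) = inorder t.
Proof.
elim: t => [|l IHl k r IHr] //.
rewrite [expand _]/= leaf_keys_Node; last by left.
by rewrite leaf_keys_Node; [rewrite IHl IHr /= -catA | right].
Qed.

Lemma expand_bst n t :
  is_bst_on (nkeys n) t -> is_bst_on (nkeys n ++ aux_keys n) (expand t).
Proof.
move=> [t_sorted t_keys]; split; rewrite inorder_expand.
- apply: sorted_flatten_map (@lt_trans _ _) (@lt_trans _ _) _ _ t_sorted.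
    by move=> k _; apply: sorted_gadget_keys.
  move=> k k'; rewrite !t_keys; exact: nat_blocks_sep gadget_keys_bound k k'.
- by move=> x; rewrite (eq_mem_flatten_map _ t_keys) mem_flatten_gadget_keys.
Qed.

Lemma expand_n_leaves n t : is_bst_on (nkeys n) t -> n_leaves n (expand t).
Proof. by move=> [_ t_keys] i i_n; rewrite leaf_keys_expand t_keys; apply/nkeysP; exists i. Qed.

Lemma fill_size c ts t : Fill c ts t -> size ts = (csize c).+1.
Proof.
elim=> // c1 ts1 t1 k c2 ts2 t2 _ IH1 _ IH2.
by rewrite size_cat IH1 IH2 /csize /= size_cat /=; lia.
Qed.

Lemma fill_ckeys_subseq c ts t : Fill c ts t -> subseq (ckeys c) (inorder t).
Proof.
elim=> [t0|c1 ts1 t1 k c2 ts2 t2 _ IH1 _ IH2] /=; first exact: sub0seq.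
by apply: cat_subseq => //=; rewrite eqxx.
Qed.

Lemma fill_perm_ckeys c c' ts ts' t t' :
  Fill c ts t -> Fill c' ts' t' -> sorted <%R (inorder t) -> sorted <%R (inorder t') ->
  perm_eq (ckeys c) (ckeys c') -> ckeys c = ckeys c'.
Proof.
move=> /fill_ckeys_subseq sub /fill_ckeys_subseq sub' t_sorted t'_sorted /perm_mem.
have lt_tr : transitive (<%R : rel rat) by move=> ? ? ?; apply: lt_trans.
apply: (irr_sorted_eq lt_tr (@ltxx _ rat)).
- exact: (subseq_sorted lt_tr sub).
- exact: (subseq_sorted lt_tr sub').
Qed.

(* The leaf [k] of a touched gadget is touched only when [k] is the accessed key. *)
Definition access_ctx (s k : rat) : ctx := if k == s then CNode Hole k Hole else Hole.
Definition access_holes (s k : rat) : seq tree :=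
  if k == s then [:: Leaf; Leaf] else [:: Node Leaf k Leaf].

Lemma fill_access_ctx s k : Fill (access_ctx s k) (access_holes s k) (Node Leaf k Leaf).
Proof.
rewrite /access_ctx /access_holes; case: (k == s); last exact: Fill_hole.
exact: (Fill_node k (Fill_hole Leaf) (Fill_hole Leaf)).
Qed.

Fixpoint expand_ctx (s : rat) (c : ctx) : ctx :=
  if c is CNode c1 k c2 then
    CNode (CNode (expand_ctx s c1) (k - delta) (access_ctx s k)) (k + delta) (expand_ctx s c2)
  else Hole.

Fixpoint expand_holes (s : rat) (ts : seq tree) (ks : seq rat) : seq tree :=
  match ts, ks with
  | t :: ts', k :: ks' => expand t :: access_holes s k ++ expand_holes s ts' ks'
  | _, _ => map expand ts
  end.

Lemma expand_holes_cat s ks1 ts1 ts2 k ks2 : size ts1 = (size ks1).+1 ->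
  expand_holes s (ts1 ++ ts2) (ks1 ++ k :: ks2) =
  expand_holes s ts1 ks1 ++ access_holes s k ++ expand_holes s ts2 ks2.
Proof.
elim: ks1 ts1 => [|k1 ks1 IH] [|t1 ts1] //=; first by case: ts1.
by move=> [/IH ->]; rewrite -catA.
Qed.

Lemma fill_expand_ctx s c ts t :
  Fill c ts t -> Fill (expand_ctx s c) (expand_holes s ts (ckeys c)) (expand t).
Proof.
elim=> [t0|c1 ts1 t1 k c2 ts2 t2 F1 IH1 _ IH2] /=; first exact: Fill_hole.
rewrite expand_holes_cat ?(fill_size F1) // catA.
exact: (Fill_node (k + delta) (Fill_node (k - delta) IH1 (fill_access_ctx s k)) IH2).
Qed.

Definition touched_keys (s k : rat) : seq rat :=
  k - delta :: (if k == s then [:: k] else [::]) ++ [:: k + delta].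

Lemma ckeys_expand_ctx s c : ckeys (expand_ctx s c) = flatten (map (touched_keys s) (ckeys c)).
Proof.
elim: c => [|c1 IH1 k c2 IH2] //=.
rewrite map_cat flatten_cat /= IH1 IH2 /touched_keys /access_ctx.
by case: (k == s); rewrite /= -!catA.
Qed.

Lemma mem_touched_keys s ks : s \in ks -> s \in flatten (map (touched_keys s) ks).
Proof.
move=> s_ks; apply/flattenP; exists (touched_keys s s); first exact: map_f.
by rewrite /touched_keys eqxx !inE eqxx orbT.
Qed.

Lemma size_touched_keys s ks : (size (flatten (map (touched_keys s) ks)) <= 3 * size ks)%N.
Proof.
elim: ks => [|k ks IH] //=; rewrite size_cat mulnS.
by case: (k == s) => /=; lia.
Qed.

Lemma step_expand n s t t' k :
  is_bst_on (nkeys n) t -> step (nkeys n) s t t' k ->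
  exists2 k', (k' <= 3 * k)%N & step (nkeys n ++ aux_keys n) s (expand t) (expand t') k'.
Proof.
move=> [t_sorted _] [c [c' [ts [[F F' s_c perm_cc' t'_bst] ->]]]].
have cc' : ckeys c = ckeys c'.
  by apply: fill_perm_ckeys F F' t_sorted _ perm_cc'; case: t'_bst.
exists (csize (expand_ctx s c)); first by rewrite /csize ckeys_expand_ctx size_touched_keys.
exists (expand_ctx s c), (expand_ctx s c'), (expand_holes s ts (ckeys c)); split=> //.
split; [exact: fill_expand_ctx | rewrite cc'; exact: fill_expand_ctx | | | exact: expand_bst].
- by rewrite ckeys_expand_ctx mem_touched_keys.
- by rewrite !ckeys_expand_ctx cc'.
Qed.

Lemma step_bst K s t t' k : step K s t t' k -> is_bst_on K t'.
Proof. by case=> [c [c' [ts [[]]]]]. Qed.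

Lemma run_expand n P t S k :
  run (nkeys n) P t S k -> is_bst_on (nkeys n) t ->
  exists2 k', (k' <= 3 * k)%N & run (nkeys n ++ aux_keys n) (n_leaves n) (expand t) S k'.
Proof.
elim=> [t0 _|s S0 t0 t1 k1 c1 _ st _ IH] t_bst.
  by exists 0%N => //; apply: run_nil; apply: expand_n_leaves.
have [k1' k1'_le st'] := step_expand t_bst st.
have [c1' c1'_le run'] := IH (step_bst st).
exists (k1' + c1')%N; first by rewrite mulnDr leq_add.
exact: run_cons (expand_n_leaves t_bst) st' run'.
Qed.

Fixpoint spine (ks : seq rat) : tree :=
  if ks is k :: ks' then Node Leaf k (spine ks') else Leaf.

Lemma inorder_spine ks : inorder (spine ks) = ks.
Proof. by elim: ks => //= k ks ->. Qed.

Fixpoint tree_ctx (t : tree) : ctx :=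
  if t is Node l k r then CNode (tree_ctx l) k (tree_ctx r) else Hole.

Fixpoint tree_holes (t : tree) : seq tree :=
  if t is Node l k r then tree_holes l ++ tree_holes r else [:: Leaf].

Lemma fill_tree_ctx t : Fill (tree_ctx t) (tree_holes t) t.
Proof.
elim: t => [|l IHl k r IHr] /=; first exact: Fill_hole.
exact: (Fill_node k IHl IHr).
Qed.

Lemma ckeys_tree_ctx t : ckeys (tree_ctx t) = inorder t.
Proof. by elim: t => //= l -> k r ->. Qed.

Lemma run_touch_all K t (S : seq rat) : is_bst_on K t -> all (mem K) S ->
  exists c, run K (fun _ => True) t S c.
Proof.
move=> t_bst; elim: S => [|s S IH] /=; first by exists 0%N; apply: run_nil.
case/andP => s_K /IH [c run_S].
exists (csize (tree_ctx t) + c)%N; apply: run_cons run_S => //.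
exists (tree_ctx t), (tree_ctx t), (tree_holes t); split=> //; split=> //.
- exact: fill_tree_ctx.
- exact: fill_tree_ctx.
- by rewrite ckeys_tree_ctx; case: t_bst => _ ->.
Qed.

Theorem mainTheorem17 (n : nat) (S : seq nat) :
  all (fun i => (0 < i <= n)%N) S ->
  exists X : seq rat,
    uniq X /\ (forall x, x \in X -> x \notin nkeys n) /\
    exists cost : nat,
      serves (nkeys n ++ X) (n_leaves n) [seq (i%:R : rat) | i <- S] cost /\
      forall c : nat,
        serves (nkeys n) (fun _ => True) [seq (i%:R : rat) | i <- S] c ->
        (cost <= 3 * c)%N.
Proof.
move=> S_n; set S' := [seq (i%:R : rat) | i <- S].
exists (aux_keys n); split; first exact: uniq_aux_keys.
split; first exact: aux_keys_notin_nkeys.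
have spine_bst : is_bst_on (nkeys n) (spine (nkeys n)).
  by split; rewrite inorder_spine // sorted_nkeys.
have S'_n : all (mem (nkeys n)) S'.
  by rewrite all_map; apply/allP => i /(allP S_n) i_n; apply/nkeysP; exists i.
have [c0 run0] := run_touch_all spine_bst S'_n.
have [opt [[t0 [t0_bst run_opt]] opt_min]] :
    exists o, is_OPT n S' o by apply: ex_minn_classic; exists c0, (spine (nkeys n)).
have [cost cost_le run_cost] := run_expand run_opt t0_bst.
exists cost; split; first by exists (expand t0); split=> //; apply: expand_bst.
by move=> c /opt_min opt_c; apply: leq_trans cost_le _; rewrite leq_mul2l.
Qed.
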